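(* Let $P\subseteq\mathbb R\times[0,\infty)$ be a countable set of points and let $\Gamma(P)$ be the graph with vertex set $P$ in which distinct $p_i=(x_i,y_i)$, $p_j=(x_j,y_j)$ are adjacent if and only if $|x_i-x_j|<e^{\frac12(y_i+y_j)}$. Then: (i) if $p_ip_j$ is an edge of $\Gamma(P)$ and $p_k\in P$ lies above the line segment $[p_i,p_j]$ (i.e. the segment $[p_i,p_j]$ intersects the vertical line through $p_k$ at a point below $p_k$), then at least one of $p_kp_i$, $p_kp_j$ is an edge of $\Gamma(P)$; (ii) if $p_ip_j$ and $p_kp_\ell$ are edges of $\Gamma(P)$ and the line segments $[p_i,p_j]$ and $[p_k,p_\ell]$ cross, then at least one of $p_ip_k, p_ip_\ell, p_jp_k, p_jp_\ell$ is an edge of $\Gamma(P)$. *)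

From Stdlib Require Export Reals.
Open Scope R_scope.

Definition pt := (R * R)%type.

Definition countable_set (P : pt -> Prop) : Prop :=
  exists f : pt -> nat, forall p q, P p -> P q -> f p = f q -> p = q.

Definition in_upper_halfplane (P : pt -> Prop) : Prop :=
  forall p, P p -> 0 <= snd p.

Definition adj (p q : pt) : Prop :=
  p <> q /\ Rabs (fst p - fst q) < exp ((snd p + snd q) / 2).

Definition seg_pt (p q : pt) (t : R) : pt :=
  ((1 - t) * fst p + t * fst q, (1 - t) * snd p + t * snd q).

Definition above_segment (r p q : pt) : Prop :=
  exists t, 0 <= t <= 1 /\ fst (seg_pt p q t) = fst r /\ snd (seg_pt p q t) < snd r.

Definition segments_cross (p1 q1 p2 q2 : pt) : Prop :=
  exists s t, 0 < s < 1 /\ 0 < t < 1 /\ seg_pt p1 q1 s = seg_pt p2 q2 t.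

From Stdlib Require Import Reals Lra Classical.
Open Scope R_scope.

(* With the weight w(p) = exp(y_p / 2), adjacency says |x_p - x_q| < w(p) w(q), and w is
   increasing in the height.  (i) If r lies above [p, q] with y_p <= y_q, then y_r > y_p, so
   |x_r - x_q| <= |x_p - x_q| < w(p) w(q) <= w(r) w(q).  (ii) If [a, b] (with y_a <= y_b) and
   [c, d] (with y_c <= y_d) cross at z, the height of z gives y_a, y_c <= y_z <= y_b, y_d, and
   the x-coordinate of z splits both edges; comparing the four pieces z - x_a, x_b - z,
   x_c - z, x_d - z with the weight products yields an edge between the two segments. *)

Definition weight (p : pt) : R := exp (snd p / 2).

Definition near (p q : pt) : Prop := Rabs (fst p - fst q) < weight p * weight q.

Lemma weight_pos p : 0 < weight p.
Proof. apply exp_pos. Qed.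

Lemma weight_le p q : snd p <= snd q -> weight p <= weight q.
Proof.
  intros H. unfold weight. destruct (Rle_lt_or_eq_dec _ _ H) as [Hlt | ->].
  - left. apply exp_increasing. lra.
  - lra.
Qed.

Lemma adj_near p q : adj p q <-> p <> q /\ near p q.
Proof.
  unfold adj, near, weight. rewrite <- exp_plus.
  replace (snd p / 2 + snd q / 2) with ((snd p + snd q) / 2) by field. tauto.
Qed.

Lemma near_sym p q : near p q -> near q p.
Proof. unfold near. rewrite Rabs_minus_sym, Rmult_comm. tauto. Qed.

Lemma adj_sym p q : adj p q -> adj q p.
Proof. rewrite !adj_near. intros [Hpq Hn]. split; [congruence | now apply near_sym]. Qed.

Lemma adj_of_near p q r : adj p q -> near r q -> adj r p \/ adj r q.
Proof.
  intros Hpq Hrq. destruct (classic (r = q)) as [-> | Hne].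
  - left. now apply adj_sym.
  - right. now apply adj_near.
Qed.

Lemma seg_pt_swap p q t : seg_pt p q t = seg_pt q p (1 - t).
Proof. unfold seg_pt. f_equal; ring. Qed.

Lemma seg_pt_snd_between p q t :
  0 <= t <= 1 -> snd p <= snd q ->
  snd p <= snd (seg_pt p q t) <= snd q.
Proof. intros Ht Hpq. unfold seg_pt; simpl. split; nra. Qed.

Lemma above_segment_swap r p q : above_segment r p q -> above_segment r q p.
Proof.
  intros (t & Ht & Hx & Hy). exists (1 - t).
  rewrite <- seg_pt_swap. repeat split; lra || assumption.
Qed.

Lemma near_above_segment r p q :
  adj p q -> above_segment r p q -> snd p <= snd q -> near r q.
Proof.
  intros Hpq (t & Ht & Hx & Hy) Hle.
  apply adj_near in Hpq as [_ Hn]. unfold near in *.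
  pose proof (seg_pt_snd_between p q t Ht Hle) as [Hlow _].
  assert (Hw : weight p <= weight r) by (apply weight_le; lra).
  unfold seg_pt in Hx; simpl in Hx.
  replace (fst r - fst q) with ((1 - t) * (fst p - fst q)) by lra.
  rewrite Rabs_mult, (Rabs_pos_eq (1 - t)) by lra.
  pose proof (Rabs_pos (fst p - fst q)). pose proof (weight_pos q). nra.
Qed.

Lemma adj_above_segment p q r :
  adj p q -> above_segment r p q -> adj r p \/ adj r q.
Proof.
  intros Hpq Habove. destruct (Rle_or_lt (snd p) (snd q)) as [Hle | Hlt].
  - apply adj_of_near; [assumption |]. now apply (near_above_segment r p q).
  - apply or_comm, adj_of_near; [now apply adj_sym |].
    apply (near_above_segment r q p); [now apply adj_sym | now apply above_segment_swap | lra].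
Qed.

(* Lengths [alpha, beta] of the two pieces of one edge and [gamma, delta] of the other,
   lying on opposite sides of the crossing abscissa; [A, C] are the lower weights. *)
Lemma crossing_pieces_bound_le (A B C D alpha beta gamma delta : R) :
  0 < A -> 0 < B -> 0 < C -> 0 < D -> A <= D -> C <= D -> D <= B ->
  0 <= alpha -> 0 <= beta -> 0 <= gamma -> 0 <= delta ->
  alpha + beta < A * B -> gamma + delta < C * D ->
  (alpha < A * D /\ delta < A * D) \/ (beta < B * C /\ gamma < B * C) \/ beta + delta < B * D.
Proof.
  intros HA HB HC HD HAD HCD HDB Ha Hb Hg Hd Hab Hgd.
  assert (Hgamma : gamma < B * C) by nra.
  destruct (Rlt_or_le beta (B * C)) as [Hbeta | Hbeta]; [tauto |].
  (* delta >= A D would force A < C, hence beta >= B C > A B. *)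
  assert (Hdelta : delta < A * D).
  { destruct (Rlt_or_le delta (A * D)) as [H | H]; [exact H |].
    assert (A < C) by nra. nra. }
  destruct (Rlt_or_le alpha (A * D)) as [Halpha | Halpha]; [tauto |].
  (* Now beta < A (B - D) <= D (B - C), and delta < C D. *)
  right; right. nra.
Qed.

Lemma crossing_pieces_bound (A B C D alpha beta gamma delta : R) :
  0 < A -> 0 < B -> 0 < C -> 0 < D -> A <= B -> A <= D -> C <= B -> C <= D ->
  0 <= alpha -> 0 <= beta -> 0 <= gamma -> 0 <= delta ->
  alpha + beta < A * B -> gamma + delta < C * D ->
  (alpha < A * D /\ delta < A * D) \/ (beta < B * C /\ gamma < B * C) \/ beta + delta < B * D.
Proof.
  intros. destruct (Rle_or_lt D B) as [HDB | HBD].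
  - now apply crossing_pieces_bound_le.
  - destruct (crossing_pieces_bound_le C D A B gamma delta alpha beta)
      as [Hc | [Hc | Hc]]; auto; lra.
Qed.

Lemma crossing_abscissas_ordered (xa xb xc xd s t A B C D : R) :
  0 <= s <= 1 -> 0 <= t <= 1 -> xa <= xb ->
  (1 - s) * xa + s * xb = (1 - t) * xc + t * xd ->
  0 < A -> 0 < B -> 0 < C -> 0 < D -> A <= B -> A <= D -> C <= B -> C <= D ->
  Rabs (xa - xb) < A * B -> Rabs (xc - xd) < C * D ->
  Rabs (xa - xc) < A * C \/ Rabs (xa - xd) < A * D \/
  Rabs (xb - xc) < B * C \/ Rabs (xb - xd) < B * D.
Proof.
  intros Hs Ht Hab Hz HA HB HC HD HAB HAD HCB HCD Heab Hecd.
  set (z := (1 - s) * xa + s * xb) in Hz.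
  assert (Hz_ab : xa <= z <= xb) by (unfold z; nra).
  rewrite Rabs_left1, Ropp_minus_distr in Heab by lra.
  destruct (Rle_or_lt xc xd) as [Hcd | Hcd].
  - (* b and d lie to the right of z *)
    assert (Hz_cd : xc <= z <= xd) by nra.
    assert (A * B <= B * D) by nra. assert (C * D <= B * D) by nra.
    rewrite Rabs_left1, Ropp_minus_distr in Hecd by lra.
    right; right; right. apply Rabs_def1; lra.
  - (* a, d lie to the left of z and b, c to the right *)
    assert (Hz_dc : xd <= z <= xc) by nra.
    rewrite Rabs_right in Hecd by lra.
    destruct (crossing_pieces_bound A B C D (z - xa) (xb - z) (xc - z) (z - xd))
      as [[H1 H2] | [[H1 H2] | H]]; try lra.
    + right; left. apply Rabs_def1; lra.
    + right; right; left. apply Rabs_def1; lra.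
    + right; right; right. apply Rabs_def1; lra.
Qed.

Lemma crossing_abscissas (xa xb xc xd s t A B C D : R) :
  0 <= s <= 1 -> 0 <= t <= 1 ->
  (1 - s) * xa + s * xb = (1 - t) * xc + t * xd ->
  0 < A -> 0 < B -> 0 < C -> 0 < D -> A <= B -> A <= D -> C <= B -> C <= D ->
  Rabs (xa - xb) < A * B -> Rabs (xc - xd) < C * D ->
  Rabs (xa - xc) < A * C \/ Rabs (xa - xd) < A * D \/
  Rabs (xb - xc) < B * C \/ Rabs (xb - xd) < B * D.
Proof.
  intros Hs Ht Hz. destruct (Rle_or_lt xa xb) as [Hab | Hab].
  - now apply (crossing_abscissas_ordered xa xb xc xd s t).
  - intros. assert (Hneg : forall u v, Rabs (u - v) = Rabs (- u - - v))
      by (intros; rewrite <- Rabs_Ropp; f_equal; ring).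
    rewrite (Hneg xa xb), (Hneg xc xd) in *.
    rewrite (Hneg xa xc), (Hneg xa xd), (Hneg xb xc), (Hneg xb xd).
    apply (crossing_abscissas_ordered (- xa) (- xb) (- xc) (- xd) s t); auto; lra.
Qed.

Lemma segments_cross_swap_l a b c d : segments_cross a b c d -> segments_cross b a c d.
Proof.
  intros (s & t & Hs & Ht & Hst). exists (1 - s), t.
  rewrite <- seg_pt_swap. repeat split; lra || assumption.
Qed.

Lemma segments_cross_swap_r a b c d : segments_cross a b c d -> segments_cross a b d c.
Proof.
  intros (s & t & Hs & Ht & Hst). exists s, (1 - t).
  rewrite <- seg_pt_swap. repeat split; lra || assumption.
Qed.

Lemma adj_segments_cross_ordered a b c d :
  adj a b -> adj c d -> segments_cross a b c d ->
  snd a <= snd b -> snd c <= snd d ->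
  adj a c \/ adj a d \/ adj b c \/ adj b d.
Proof.
  intros Hab Hcd (s & t & Hs & Ht & Hst) Hyab Hycd.
  pose proof (seg_pt_snd_between a b s ltac:(lra) Hyab) as Hz_ab.
  pose proof (seg_pt_snd_between c d t ltac:(lra) Hycd) as Hz_cd.
  rewrite Hst in Hz_ab.
  assert (Hdc := adj_sym _ _ Hcd).
  pose proof (proj2 (proj1 (adj_near a b) Hab)) as Hnab.
  pose proof (proj2 (proj1 (adj_near c d) Hcd)) as Hncd.
  assert (Hx : (1 - s) * fst a + s * fst b = (1 - t) * fst c + t * fst d)
    by exact (f_equal fst Hst).
  destruct (crossing_abscissas (fst a) (fst b) (fst c) (fst d) s t
              (weight a) (weight b) (weight c) (weight d))
    as [Hn | [Hn | [Hn | Hn]]];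
    try apply weight_pos; try apply weight_le; try lra; try assumption.
  - destruct (adj_of_near d c a Hdc Hn); tauto.
  - destruct (adj_of_near c d a Hcd Hn); tauto.
  - destruct (adj_of_near d c b Hdc Hn); tauto.
  - destruct (adj_of_near c d b Hcd Hn); tauto.
Qed.

Lemma adj_segments_cross a b c d :
  adj a b -> adj c d -> segments_cross a b c d ->
  adj a c \/ adj a d \/ adj b c \/ adj b d.
Proof.
  intros Hab Hcd Hcross.
  assert (Hba := adj_sym _ _ Hab). assert (Hdc := adj_sym _ _ Hcd).
  pose proof (segments_cross_swap_l _ _ _ _ Hcross) as Hcross_ba.
  pose proof (segments_cross_swap_r _ _ _ _ Hcross) as Hcross_dc.
  pose proof (segments_cross_swap_r _ _ _ _ Hcross_ba) as Hcross_badc.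
  destruct (Rle_or_lt (snd a) (snd b)), (Rle_or_lt (snd c) (snd d)).
  - now apply adj_segments_cross_ordered.
  - pose proof (adj_segments_cross_ordered a b d c Hab Hdc Hcross_dc ltac:(lra) ltac:(lra)).
    tauto.
  - pose proof (adj_segments_cross_ordered b a c d Hba Hcd Hcross_ba ltac:(lra) ltac:(lra)).
    tauto.
  - pose proof (adj_segments_cross_ordered b a d c Hba Hdc Hcross_badc ltac:(lra) ltac:(lra)).
    tauto.
Qed.

Theorem lemma2p1 (P : pt -> Prop) :
  countable_set P -> in_upper_halfplane P ->
  (forall pi pj pk, P pi -> P pj -> P pk ->
     adj pi pj -> above_segment pk pi pj -> adj pk pi \/ adj pk pj) /\
  (forall pi pj pk pl, P pi -> P pj -> P pk -> P pl ->
     adj pi pj -> adj pk pl -> segments_cross pi pj pk pl ->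
     adj pi pk \/ adj pi pl \/ adj pj pk \/ adj pj pl).
Proof.
  intros _ _. split.
  - intros pi pj pk _ _ _. apply adj_above_segment.
  - intros pi pj pk pl _ _ _ _. apply adj_segments_cross.
Qed.
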